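(* Let $0\le x\le1$, $0\le y\le1$ and $0<\alpha<\infty$. Then $$\sqrt{xy}+\sqrt{(1-x)(1-y)}\le 1+\frac12(\alpha-1)x+\frac12\Big(\frac1\alpha-1\Big)y.$$ *)

From Stdlib Require Export Reals.

(* Split [xy = (alpha x)(y / alpha)] and bound both square roots by AM-GM:
   the two arithmetic means add up to exactly the right-hand side. *)
From Stdlib Require Import Reals Lra Psatz.
Open Scope R_scope.

Lemma sqrt_mult_le_mean (a b : R) :
  0 <= a -> 0 <= b -> sqrt (a * b) <= (a + b) / 2.
Proof.
  intros Ha Hb.
  rewrite sqrt_mult by lra.
  pose proof (sqrt_sqrt a Ha) as Ea; pose proof (sqrt_sqrt b Hb) as Eb.
  pose proof (pow2_ge_0 (sqrt a - sqrt b)) as Hsq.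
  simpl in Hsq; lra.
Qed.

Lemma sqrt_mult_le_scaled_mean (a b t : R) :
  0 <= a -> 0 <= b -> 0 < t -> sqrt (a * b) <= (t * a + / t * b) / 2.
Proof.
  intros Ha Hb Ht.
  assert (Hti : 0 < / t) by (apply Rinv_0_lt_compat; lra).
  replace (a * b) with ((t * a) * (/ t * b)) by (field; lra).
  apply sqrt_mult_le_mean; nra.
Qed.

Theorem lemma1 (x y alpha : R)
  (hx0 : 0 <= x) (hx1 : x <= 1) (hy0 : 0 <= y) (hy1 : y <= 1) (ha : 0 < alpha) :
  sqrt (x * y) + sqrt ((1 - x) * (1 - y))
    <= 1 + / 2 * (alpha - 1) * x + / 2 * (/ alpha - 1) * y.
Proof.
  pose proof (sqrt_mult_le_scaled_mean x y alpha hx0 hy0 ha).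
  pose proof (sqrt_mult_le_mean (1 - x) (1 - y) ltac:(lra) ltac:(lra)).
  lra.
Qed.
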